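(* Let documents $t_1,\ldots,t_N$, each containing at most $L$ distinct words from a dictionary of $D\ge 2$ words, arrive one at a time in a stream. Fix $\epsilon\in(0,1]$ and $p=2\log D$. The streaming algorithm maintains, for each word $x$, a counter $\#(x)$ of the number of documents seen so far containing $x$, and a hash map $H$ keyed by pairs of words, each entry holding a bag of numbers. On arrival of a document, the counters are updated, and for each unordered pair of distinct words $x,y$ in the document, with an independent coin flip of probability $q=\min\!\left(1,\frac{p}{\epsilon}\frac{1}{\sqrt{\#(x)\#(y)}}\right)$ (computed with the current counter values), the value $q$ is inserted into the bag of $(x,y)$ in $H$. Then the expected total memory used by this algorithm (the size of $H$ together with the counters) is $O(DL\lg(N)\log(D)/\epsilon)$.
   Context: $\lg$ is the base-2 logarithm and $\log$ the natural logarithm. Queries for the similarity of $x,y$ are answered by independently subsampling each stored value $q_i$ in the bag of $(x,y)$ with probability $\frac{p}{\epsilon}\frac{1}{q_i\sqrt{\#(x)\#(y)}}$ and scaling the number of survivors by $\epsilon/p$; queries do not affect memory. *)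

From HB Require Import structures.
From mathcomp Require Import all_boot all_order all_algebra.
From mathcomp Require Import all_classical all_reals all_analysis.
Set Implicit Arguments. Unset Strict Implicit. Unset Printing Implicit Defensive.
Import Order.TTheory GRing.Theory Num.Theory.
Local Open Scope ring_scope.

Section Stream.
Variables (R : realType) (D N : nat).

Notation docs := ('I_N -> {set 'I_D}).
(* coin index: (k, x, y) = document k, pair of words x < y *)
Notation coin := ('I_N * 'I_D * 'I_D)%type.

(* #(x) after the counters have been updated on arrival of document k *)
Definition cnt (t : docs) (k : 'I_N) (x : 'I_D) : nat :=
  #|[set i : 'I_N | (i <= k)%N && (x \in t i)]|.

(* (k,x,y) is an actual coin flip: x,y distinct words of document k,
   each unordered pair represented once by x < y *)
Definition valid (t : docs) (c : coin) : bool :=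
  let: (k, x, y) := c in [&& (x < y)%N, x \in t k & y \in t k].

Definition pparam : R := 2 * ln (D%:R : R).

Definition qprob (eps : R) (t : docs) (k : 'I_N) (x y : 'I_D) : R :=
  Num.min 1 (pparam / eps / Num.sqrt ((cnt t k x)%:R * (cnt t k y)%:R)).

(* success probability of coin c (0 for non-existent coins) *)
Definition coinp (eps : R) (t : docs) (c : coin) : R :=
  let: (k, x, y) := c in if valid t c then qprob eps t k x y else 0.

Definition weight (eps : R) (t : docs) (w : {ffun coin -> bool}) : R :=
  \prod_(c : coin) (if w c then coinp eps t c else 1 - coinp eps t c).

(* memory: D counters, plus the number of keys of H, plus the total
   number of values stored in the bags *)
Definition memory (w : {ffun coin -> bool}) : nat :=
  (D + #|[set xy : 'I_D * 'I_D | [exists k : 'I_N, w (k, xy.1, xy.2)]]|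
     + #|[set c : coin | w c]|)%N.

Definition expected_memory (eps : R) (t : docs) : R :=
  \sum_(w : {ffun coin -> bool}) weight eps t w * (memory w)%:R.

End Stream.

Definition lg {R : realType} (x : R) : R := ln x / ln 2.

From HB Require Import structures.
From mathcomp Require Import all_boot all_order all_algebra.
From mathcomp Require Import all_classical all_reals all_analysis.
From mathcomp Require Import zify ring lra.
Import Order.TTheory GRing.Theory Num.Theory.
Local Open Scope ring_scope.
Set Implicit Arguments. Unset Strict Implicit.

(* The memory is at most the D counters plus twice the number of stored
   values, whose expectation is the sum of the coin probabilities.  For a pair
   x, y of document k, 1 / sqrt(#(x) #(y)) <= 1/#(x) + 1/#(y), so the coins of
   document k have total probability at most (p/eps) 2L sum_x 1/#(x).  Over the
   documents containing x the counter #(x) takes distinct values in 1..N, so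
   summing over documents gives at most (p/eps) 2L D H_N with H_N <= 2 lg N. *)

Section BernoulliProduct.
Variables (R : comNzRingType) (I : finType) (a : I -> R).

Lemma sum_bernoulli_prod :
  \sum_(w : {ffun I -> bool}) \prod_i (if w i then a i else 1 - a i) = 1.
Proof.
rewrite -(bigA_distr_bigA (fun i (b : bool) => if b then a i else 1 - a i)).
by apply: big1 => i _; rewrite big_bool /= addrC subrK.
Qed.

Lemma sum_bernoulli_prod_indicator i0 :
  \sum_(w : {ffun I -> bool})
     (\prod_i (if w i then a i else 1 - a i)) * (w i0)%:R = a i0.
Proof.
pose G i (b : bool) := if b then a i else (i != i0)%:R * (1 - a i).
transitivity (\sum_(w : {ffun I -> bool}) \prod_i G i (w i)).
  apply: eq_bigr => w _; rewrite (bigD1 i0) //= [RHS](bigD1 i0) //= /G eqxx.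
  rewrite [X in _ = _ * X](eq_bigr (fun i => if w i then a i else 1 - a i)).
    by case: (w i0); rewrite /= ?mulr1 ?mulr0 ?mul0r // mulrC.
  by move=> i ->; rewrite mul1r.
rewrite -(bigA_distr_bigA G) (bigD1 i0) //= big_bool /G eqxx /= mul0r addr0.
rewrite big1 ?mulr1 // => i ->.
by rewrite big_bool /= mul1r addrC subrK.
Qed.

End BernoulliProduct.

Lemma sumr_indicator (R : nzSemiRingType) (T : finType) (A : {pred T}) :
  \sum_(y : T) ((y \in A)%:R : R) = #|A|%:R.
Proof.
rewrite -sumr_const [RHS]big_mkcond; apply: eq_bigr => y _.
by case: (y \in A).
Qed.

Lemma sumr_symmetric_products (R : comNzSemiRingType) (I : finType) (f g : I -> R) :
  \sum_x \sum_y (f x * g y + g x * f y) = 2 * (\sum_x f x) * \sum_y g y.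
Proof.
rewrite (eq_bigr (fun x => f x * \sum_y g y + g x * \sum_y f y)); last first.
  by move=> x _; rewrite big_split /= -!mulr_sumr.
rewrite big_split /= -!mulr_suml [X in _ + X]mulrC.
by rewrite mulr2n !mulrDl !mul1r.
Qed.

Lemma ln_subr_ge (R : realType) (x y : R) :
  0 < x -> 0 < y -> 1 - x / y <= ln y - ln x.
Proof.
move=> x0 y0.
have gtN1 : -1 < x / y - 1 by have := divr_gt0 x0 y0; lra.
have := le_ln1Dx gtN1; rewrite addrC subrK ln_div ?posrE //.
by move=> h; rewrite -opprB -[ln y - ln x]opprB lerN2.
Qed.

Definition harmonic (R : numFieldType) (n : nat) : R := \sum_(j < n) ((j.+1)%:R)^-1.

Lemma harmonic_le_1Dln (R : realType) (n : nat) :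
  (0 < n)%N -> harmonic R n <= 1 + ln n%:R.
Proof.
elim: n => // -[_|n IH _]; first by rewrite /harmonic big_ord1 ln1 invr1 addr0.
rewrite /harmonic big_ord_recr /= -/(harmonic R n.+1).
have step : ((n.+2)%:R)^-1 <= ln (n.+2)%:R - ln (n.+1)%:R :> R.
  have -> : ((n.+2)%:R)^-1 = 1 - (n.+1)%:R / (n.+2)%:R :> R.
    rewrite -[(n.+2)%:R]natr1; field.
    by apply: lt0r_neq0; have := ler0n R n; lra.
  exact: ln_subr_ge.
by have := lerD (IH isT) step; rewrite addrACA subrr addr0.
Qed.

Lemma ln2_gt0 (R : realType) : 0 < ln (2 : R).
Proof. by rewrite ln_gt0 // ltr1n. Qed.

Lemma lg_ge1 (R : realType) (n : nat) : (2 <= n)%N -> 1 <= lg (n%:R : R).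
Proof.
by move=> n2; rewrite /lg ler_pdivlMr ?ln2_gt0 // mul1r ler_ln ?posrE ?ltr0n ?ler_nat //; lia.
Qed.

Lemma ln_le_lg (R : realType) (x : R) : 1 <= x -> ln x <= lg x.
Proof.
move=> x1; have ln2_le1 : ln (2 : R) <= 1.
  by rewrite -[leRHS](expRK 1) ler_ln ?posrE ?expR_gt0 // (le_trans _ (expR_ge1Dx 1)).
by rewrite /lg ler_pdivlMr ?ln2_gt0 // ler_piMr // ln_ge0.
Qed.

Lemma harmonic_le_2lg (R : realType) (n : nat) :
  (2 <= n)%N -> harmonic R n <= 2 * lg (n%:R : R).
Proof.
move=> n2; apply: le_trans (harmonic_le_1Dln _ (ltnW n2)) _.
by rewrite mulr2n mulrDl mul1r lerD ?lg_ge1 ?ln_le_lg // ler1n ltnW.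
Qed.

Section DocumentFrequency.
Variables (D N : nat) (t : 'I_N -> {set 'I_D}) (x : 'I_D).

Lemma cnt_gt0 k : x \in t k -> (0 < cnt t k x)%N.
Proof. by move=> xk; rewrite card_gt0; apply/set0Pn; exists k; rewrite inE leqnn. Qed.

Lemma cnt_ltn (k1 k2 : 'I_N) :
  (k1 < k2)%N -> x \in t k2 -> (cnt t k1 x < cnt t k2 x)%N.
Proof.
move=> lt12 xk2; apply: proper_card; apply/properP; split.
  apply/fintype.subsetP => i; rewrite !inE => /andP[ik ->]; rewrite andbT.
  exact: leq_trans ik (ltnW lt12).
by exists k2; rewrite inE ?leqnn ?xk2 // negb_and -ltnNge lt12.
Qed.

Lemma cnt_pred_ltn k : ((cnt t k x).-1 < N)%N.
Proof.
have := ltn_ord k; have : (cnt t k x <= N)%N.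
  by apply: leq_trans (max_card _) _; rewrite card_ord.
lia.
Qed.

(* At the documents containing [x] the counter takes distinct values in
   1, ..., N, so the sum of their inverses is at most the harmonic number. *)
Definition cnt_rank k : 'I_N := Ordinal (cnt_pred_ltn k).

Lemma cnt_rank_inj : {in [set k | x \in t k] &, injective cnt_rank}.
Proof.
move=> k1 k2; rewrite !inE => xk1 xk2 /(congr1 val) /= eq_pred.
have eq_cnt : cnt t k1 x = cnt t k2 x.
  by have := cnt_gt0 xk1; have := cnt_gt0 xk2; lia.
apply/val_inj/eqP; case: ltngtP => // lt_k.
  by have := cnt_ltn lt_k xk2; rewrite eq_cnt ltnn.
by have := cnt_ltn lt_k xk1; rewrite eq_cnt ltnn.
Qed.

Lemma sum_inv_cnt_le_harmonic (R : realType) :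
  \sum_k ((x \in t k)%:R / (cnt t k x)%:R) <= harmonic R N.
Proof.
set S := [set k | x \in t k].
have -> : \sum_k ((x \in t k)%:R / (cnt t k x)%:R) =
          \sum_(k in S) (((cnt_rank k).+1)%:R)^-1 :> R.
  rewrite [RHS]big_mkcond; apply: eq_bigr => k _; rewrite inE.
  by case: ifP => xk; rewrite ?mul0r //= prednK ?mul1r ?cnt_gt0.
rewrite -(big_imset (fun j : 'I_N => ((j.+1)%:R)^-1 :> R) cnt_rank_inj) /=.
rewrite /harmonic [leRHS](bigID (mem (cnt_rank @: S))) /= lerDl.
by apply: sumr_ge0 => j _; rewrite invr_ge0.
Qed.

End DocumentFrequency.

Lemma invr_sqrtM_le (R : rcfType) (a b : R) :
  1 <= a -> 1 <= b -> (Num.sqrt (a * b))^-1 <= a^-1 + b^-1.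
Proof.
wlog ab : a b / a <= b.
  move=> W a1 b1; case: (leP a b) => [|/ltW] ba; first exact: W.
  by rewrite mulrC addrC; apply: W.
move=> a1 b1; have a0 : 0 < a by apply: lt_le_trans a1.
have sqrt_ge : a <= Num.sqrt (a * b).
  rewrite -[a in a <= _](ger0_norm (ltW a0)) -sqrtr_sqr ler_sqrt.
    by rewrite expr2 ler_pM2l.
  by rewrite mulr_ge0 // ltW // (lt_le_trans a0).
apply: le_trans (_ : a^-1 <= _); last by rewrite lerDl invr_ge0 (le_trans ler01).
by rewrite lef_pV2 ?posrE // (lt_le_trans a0).
Qed.

Section CoinProbabilities.
Variables (R : realType) (D N : nat) (eps : R) (t : 'I_N -> {set 'I_D}).
Hypotheses (D_gt0 : (0 < D)%N) (eps_ge0 : 0 <= eps).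

Lemma pparam_ge0 : 0 <= pparam R D.
Proof. by rewrite mulr_ge0 // ln_ge0 // ler1n. Qed.

Lemma coinp_ge0 c : 0 <= coinp eps t c.
Proof.
case: c => [[k x] y] /=; case: ifP => // _; rewrite le_min ler01 /=.
by rewrite !divr_ge0 ?sqrtr_ge0 ?pparam_ge0.
Qed.

Lemma coinp_le1 c : coinp eps t c <= 1.
Proof. by case: c => [[k x] y] /=; case: ifP => // _; rewrite ge_min lexx. Qed.

Lemma coinp_le k x y :
  coinp eps t (k, x, y) <= pparam R D / eps *
    ((x \in t k)%:R / (cnt t k x)%:R * (y \in t k)%:R +
     (x \in t k)%:R * ((y \in t k)%:R / (cnt t k y)%:R)).
Proof.
have p_ge0 : 0 <= pparam R D / eps by rewrite divr_ge0 ?pparam_ge0.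
rewrite /=; case: ifP => [/and3P[_ xk yk]|_]; last first.
  by rewrite mulr_ge0 // addr_ge0 // !mulr_ge0 ?divr_ge0.
rewrite xk yk !mul1r !mulr1.
apply: le_trans
  (_ : _ <= pparam R D / eps / Num.sqrt ((cnt t k x)%:R * (cnt t k y)%:R)) _.
  by rewrite /qprob ge_min lexx orbT.
by rewrite ler_wpM2l // invr_sqrtM_le // ler1n cnt_gt0.
Qed.

Lemma sum_coinp_le (L : nat) : (forall k, #|t k| <= L)%N ->
  \sum_c coinp eps t c <= pparam R D / eps * (2 * L%:R * (D%:R * harmonic R N)).
Proof.
move=> card_le; have p_ge0 : 0 <= pparam R D / eps by rewrite divr_ge0 ?pparam_ge0.
pose f k z := ((z \in t k)%:R / (cnt t k z)%:R : R).
have f_ge0 k z : 0 <= f k z by rewrite divr_ge0.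
have doc_le k : \sum_x \sum_y coinp eps t (k, x, y) <=
                pparam R D / eps * (2 * L%:R * \sum_x f k x).
  apply: le_trans (ler_sum _ (fun x _ => ler_sum _ (fun y _ => coinp_le k x y))) _.
  under eq_bigr => x _ do rewrite -mulr_sumr.
  rewrite -mulr_sumr ler_wpM2l //.
  rewrite (sumr_symmetric_products (f k) (fun z => (z \in t k)%:R)) sumr_indicator.
  by rewrite mulrAC ler_wpM2r ?sumr_ge0 // ler_wpM2l // ler_nat.
have -> : \sum_c coinp eps t c = \sum_k \sum_x \sum_y coinp eps t (k, x, y).
  rewrite pair_bigA (pair_bigA _ (fun p y => coinp eps t (p.1, p.2, y))).
  by apply: eq_bigr => -[[]].
apply: le_trans (ler_sum _ (fun k _ => doc_le k)) _.
rewrite -mulr_sumr ler_wpM2l // -mulr_sumr ler_wpM2l ?mulr_ge0 //.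
rewrite exchange_big /=.
apply: le_trans (ler_sum _ (fun x _ => sum_inv_cnt_le_harmonic t x R)) _.
by rewrite sumr_const card_ord mulr_natl.
Qed.
End CoinProbabilities.

Lemma memory_le (D N : nat) (w : {ffun 'I_N * 'I_D * 'I_D -> bool}) :
  (memory w <= D + 2 * #|[set c | w c]|)%N.
Proof.
have keys_le : (#|[set xy : 'I_D * 'I_D | [exists k, w (k, xy.1, xy.2)]]|
                 <= #|[set c | w c]|)%N.
  apply: leq_trans (leq_imset_card (fun c : 'I_N * 'I_D * 'I_D => (c.1.2, c.2)) _).
  apply: subset_leq_card; apply/fintype.subsetP => -[x y].
  by rewrite inE => /existsP[k wk]; apply/imsetP; exists (k, x, y); rewrite ?inE.
by rewrite /memory -addnA leq_add2l mul2n -addnn leq_add2r.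
Qed.

(* Every key of H holds at least one value, and by linearity of expectation
   the expected number of values is the sum of the coin probabilities. *)
Lemma expected_memory_le (R : realType) (D N : nat) (eps : R)
    (t : 'I_N -> {set 'I_D}) :
  (0 < D)%N -> 0 <= eps ->
  expected_memory eps t <= D%:R + 2 * \sum_c coinp eps t c.
Proof.
move=> D_gt0 eps_ge0.
have weight_ge0 w : 0 <= weight eps t w.
  apply: prodr_ge0 => c _; case: (w c); first exact: coinp_ge0.
  by rewrite subr_ge0 coinp_le1.
apply: le_trans (_ : \sum_w weight eps t w * (D%:R + 2 * \sum_c (w c)%:R) <= _).
  apply: ler_sum => w _; rewrite ler_wpM2l //.
  have -> : \sum_c ((w c)%:R : R) = #|[set c | w c]|%:R.
    by rewrite -sumr_indicator; apply: eq_bigr => c _; rewrite inE.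
  by rewrite -natrM -natrD ler_nat memory_le.
under eq_bigr => w _ do rewrite mulrDr mulrCA mulr_sumr.
rewrite big_split /= -!mulr_suml -mulr_sumr exchange_big /=.
rewrite /weight sum_bernoulli_prod mul1r.
by under eq_bigr => c _ do rewrite sum_bernoulli_prod_indicator.
Qed.

Theorem theorem7 (R : realType) :
  exists C : R, 0 < C /\
  forall (D N L : nat) (eps : R) (t : 'I_N -> {set 'I_D}),
    (2 <= D)%N -> (2 <= N)%N -> (1 <= L)%N ->
    0 < eps -> eps <= 1 ->
    (forall k, #|t k| <= L)%N ->
    expected_memory eps t <=
      C * D%:R * L%:R * lg (N%:R : R) * ln (D%:R : R) / eps.
Proof.
exists (16 + (ln 2)^-1); split; first by rewrite addr_gt0 // invr_gt0 ln2_gt0.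
move=> D N L eps t D2 N2 L1 eps_gt0 eps_le1 card_le.
apply: le_trans (expected_memory_le t (ltnW D2) (ltW eps_gt0)) _.
have := sum_coinp_le (ltnW D2) (ltW eps_gt0) card_le.
rewrite -(ler_pM2l (ltr0n R 2)) -(lerD2l D%:R) => /le_trans; apply.
have lnD_ge0 : 0 <= ln (D%:R : R) by rewrite ln_ge0 // ler1n ltnW.
have inv_eps_ge1 : 1 <= eps^-1 by rewrite invr_ge1 ?unitfE ?gt_eqF.
have scale_ge1 : 1 <= L%:R * lg (N%:R : R) * lg (D%:R : R) / eps.
  apply: mulr_ege1 => //; apply: mulr_ege1; last exact: lg_ge1.
  by apply: mulr_ege1; [rewrite ler1n | exact: lg_ge1].
have factor_ge0 : 0 <= D%:R * L%:R * ln (D%:R : R) / eps.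
  by rewrite !mulr_ge0 // invr_ge0 ltW.
have -> : (16 + (ln 2)^-1) * D%:R * L%:R * lg (N%:R : R) * ln (D%:R : R) / eps =
    D%:R * (L%:R * lg N%:R * lg D%:R / eps) +
    D%:R * L%:R * ln D%:R / eps * (16 * lg (N%:R : R)) by rewrite /lg; ring.
have -> : D%:R + 2 * (pparam R D / eps * (2 * L%:R * (D%:R * harmonic R N))) =
    D%:R + D%:R * L%:R * ln D%:R / eps * (8 * harmonic R N) by rewrite /pparam; ring.
rewrite lerD ?ler_peMr ?ler_wpM2l //.
by have := harmonic_le_2lg R N2; lra.
Qed.
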